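(* For a mutually orthogonal $d$-dimensional pure-state ensemble $\Omega=\{(1/k,|\psi_i\rangle)\}_{i=0}^{k-1}$ with $k<d$, a necessary condition for $\Omega$ to saturate $\mathbf{C}_{\mathrm{MIO}}(\Omega)+\mathbf{S}(\Omega)=\log_2 d$ is \[ C_{\max}(\hat\omega)+S(\hat\omega)=\log_2 d, \] where $\hat\omega=\frac1k\sum_{i=0}^{k-1}|\psi_i\rangle\langle\psi_i|$.
   Context: Incoherent states $\mathcal{I}$ are diagonal in the computational basis; MIO are channels mapping $\mathcal{I}$ into itself. $C_R(\rho)=\min\{s\ge0:(\rho+s\tau)/(1+s)\in\mathcal{I}\text{ for some state }\tau\}$ is the robustness of coherence and $C_{\max}(\rho)=\log_2(1+C_R(\rho))=\min_{\sigma\in\mathcal{I}}D_{\max}(\rho\|\sigma)$ is the max-relative entropy of coherence. $\mathbf{C}_{\mathrm{MIO}}(\Omega)=\log_2(1+\eta)$, $\eta=\max\sum_jp_jC_R(\sigma_j)$ over MIO channels $\mathcal{N}_{A\to BA'}$ ($\dim B=k$, $A'\cong A$) with $\sigma_j=\mathrm{tr}_B[\mathcal{N}(\rho_j)]$ and $\sum_jp_j\mathrm{tr}[\mathcal{N}(\rho_j)(|j\rangle\langle j|_B\otimes I_{A'})]=P_{\mathrm{suc}}(\Omega)$ (optimal POVM discrimination probability). $\mathbf{S}(\Omega)=S(\hat\omega)$, the von Neumann entropy of the average state. *)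

From HB Require Import structures.
From mathcomp Require Import all_boot all_order all_algebra.
From mathcomp Require Import complex mxtens.
From mathcomp Require Import boolp classical_sets reals exp.
Set Implicit Arguments. Unset Strict Implicit. Unset Printing Implicit Defensive.
Import Order.TTheory GRing.Theory Num.Theory.
Local Open Scope ring_scope.
Local Open Scope complex_scope.

Section QDefs.
Variable R : realType.
Local Notation C := R[i].

Definition adj {m n} (A : 'M[C]_(m, n)) : 'M[C]_(n, m) := (map_mx (@conjc R) A)^T.

(* positive semidefinite: <v|A|v> is a nonnegative real for every v *)
Definition psd {n} (A : 'M[C]_n) : Prop :=
  forall v : 'cV[C]_n, 0 <= (adj v *m A *m v) 0 0.

Definition is_state {n} (A : 'M[C]_n) : Prop := psd A /\ \tr A = 1.

Definition incoherent {n} (A : 'M[C]_n) : Prop := is_state A /\ is_diag_mx A.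

Definition log2 (x : R) : R := ln x / ln 2.

Definition xlog2x (x : R) : R := if x == 0 then 0 else x * log2 x.

Definition spectrum {n} (A : 'M[C]_n) (lam : 'I_n -> R) : Prop :=
  char_poly A = \prod_(i < n) ('X - ((lam i)%:C)%:P).

(* von Neumann entropy S(rho) = - sum_i lam_i log2 lam_i (the set is a singleton) *)
Definition vN_entropy {n} (A : 'M[C]_n) : R :=
  sup [set s : R | exists lam, spectrum A lam /\ s = - \sum_(i < n) xlog2x (lam i)].

Definition robustness {n} (rho : 'M[C]_n) : R :=
  inf [set s : R | 0 <= s /\ exists tau : 'M[C]_n, is_state tau /\
         incoherent (((1 + s)^-1)%:C *: (rho + s%:C *: tau))].

Definition Cmax {n} (rho : 'M[C]_n) : R := log2 (1 + robustness rho).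

Definition is_channel {m n} (N : 'M[C]_m -> 'M[C]_n) : Prop :=
  exists (l : nat) (K : 'I_l -> 'M[C]_(n, m)),
    (forall X, N X = \sum_(i < l) K i *m X *m adj (K i)) /\
    \sum_(i < l) adj (K i) *m K i = 1%:M.

Definition is_MIO {m n} (N : 'M[C]_m -> 'M[C]_n) : Prop :=
  is_channel N /\ forall sigma, incoherent sigma -> incoherent (N sigma).

(* partial trace over the first factor B (dim k) of B (x) A' (dim d) *)
Definition ptraceB {k d} (X : 'M[C]_(k * d)) : 'M[C]_d :=
  \matrix_(a, a') \sum_(b < k) X (mxtens_index (b, a)) (mxtens_index (b, a')).

Definition is_povm {k d} (M : 'I_k -> 'M[C]_d) : Prop :=
  (forall j, psd (M j)) /\ \sum_(j < k) M j = 1%:M.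

Definition P_suc {k d} (p : 'I_k -> R) (rho : 'I_k -> 'M[C]_d) : R :=
  sup [set x : R | exists M : 'I_k -> 'M[C]_d, is_povm M /\
         x = complex.Re (\sum_(j < k) (p j)%:C * \tr (M j *m rho j))].

Definition eta_MIO {k d} (p : 'I_k -> R) (rho : 'I_k -> 'M[C]_d) : R :=
  sup [set x : R | exists N : 'M[C]_d -> 'M[C]_(k * d), is_MIO N /\
         complex.Re (\sum_(j < k) (p j)%:C *
               \tr (N (rho j) *m (delta_mx j j *t (1%:M : 'M[C]_d)))) = P_suc p rho /\
         x = \sum_(j < k) p j * robustness (ptraceB (N (rho j)))].

Definition C_MIO {k d} (p : 'I_k -> R) (rho : 'I_k -> 'M[C]_d) : R :=
  log2 (1 + eta_MIO p rho).

Definition avg_state {k d} (p : 'I_k -> R) (rho : 'I_k -> 'M[C]_d) : 'M[C]_d :=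
  \sum_(j < k) (p j)%:C *: rho j.

Definition pure_proj {d} (psi : 'cV[C]_d) : 'M[C]_d := psi *m adj psi.

Definition orthonormal_vecs {k d} (psi : 'I_k -> 'cV[C]_d) : Prop :=
  forall i j, (adj (psi i) *m psi j) 0 0 = (i == j)%:R.

Definition unif {k} : 'I_k -> R := fun _ => k%:R^-1.

End QDefs.
Arguments unif {R k}.

From HB Require Import structures.
From mathcomp Require Import all_boot all_order all_algebra.
From mathcomp Require Import complex mxtens.
From mathcomp Require Import boolp classical_sets reals exp.
From mathcomp Require Import ring lra.
Import Order.TTheory GRing.Theory Num.Theory.

(* Since the states psi_j are orthogonal they can be discriminated perfectly,
   so an MIO attaining P_suc must send psi_j into the j-th block of B (x) A'.
   Feeding the same MIO an incoherent mixture (omega + s tau)/(1 + s) and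
   comparing block by block yields incoherent mixtures for the reduced
   outputs whose weights average to s; hence eta <= C_R(omega).  On the other
   hand omega = P/k for the projector P onto span {psi_j}, and mixing in
   (1 - P)/(d - k) gives I/d, so C_R(omega) <= d/k - 1, while the spectrum of
   omega is k copies of 1/k, so S(omega) <= log2 k.  Altogether
   log2 d = C_MIO + S <= C_max + S <= log2 (d/k) + log2 k = log2 d. *)

Set Implicit Arguments. Unset Strict Implicit. Unset Printing Implicit Defensive.
Local Open Scope classical_set_scope.
Local Open Scope ring_scope.
Local Open Scope complex_scope.

Section SupInf.
Variable R : realType.
Implicit Types (S : set R) (b x : R).

Lemma inf_ge0 S : (forall y, S y -> 0 <= y) -> 0 <= inf S.
Proof.
move=> S_ge0; have [->|/set0P S_neq0] := eqVneq S set0; first by rewrite inf0.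
exact: lb_le_inf.
Qed.

Lemma inf_le_ge0 S x : (forall y, S y -> 0 <= y) -> S x -> inf S <= x.
Proof. by move=> S_ge0 Sx; apply: ge_inf => //; exists 0. Qed.

Lemma sup_le_ge0 S b : (forall y, S y -> y <= b) -> 0 <= b -> sup S <= b.
Proof.
move=> S_le b_ge0; have [->|/set0P S_neq0] := eqVneq S set0; first by rewrite sup0.
exact: ge_sup.
Qed.

Lemma le_sup_ub S b x : (forall y, S y -> y <= b) -> S x -> x <= sup S.
Proof. by move=> S_le Sx; apply: ub_le_sup => //; exists b. Qed.

Lemma sup_ge0 S b : (forall y, S y -> 0 <= y) -> (forall y, S y -> y <= b) ->
  0 <= sup S.
Proof.
move=> S_ge0 S_le; have [->|/set0P [x Sx]] := eqVneq S set0; first by rewrite sup0.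
exact: le_trans (S_ge0 _ Sx) (le_sup_ub S_le Sx).
Qed.

End SupInf.

Section Log2.
Variable R : realType.
Implicit Types x y : R.

Lemma log2_ge0 x : 1 <= x -> 0 <= log2 x.
Proof.
by move=> x_ge1; apply: divr_ge0; [exact: ln_ge0 | apply/ltW/ln_gt0; rewrite ltr1n].
Qed.

Lemma ler_log2 x y : 0 < x -> x <= y -> log2 x <= log2 y.
Proof.
move=> x_gt0 le_xy; rewrite /log2 ler_pM2r ?invr_gt0 ?ln_gt0 ?ltr1n //.
by rewrite ler_ln ?posrE // (lt_le_trans x_gt0 le_xy).
Qed.

Lemma log2_div x y : 0 < x -> 0 < y -> log2 (x / y) = log2 x - log2 y.
Proof. by move=> x_gt0 y_gt0; rewrite /log2 ln_div ?posrE // mulrBl. Qed.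

Lemma log2V x : 0 < x -> log2 x^-1 = - log2 x.
Proof. by move=> x_gt0; rewrite /log2 lnV ?posrE // mulNr. Qed.

End Log2.

(* Rewriting right to left with the generic [rmorphM] is very slow here. *)
Lemma realcM (R : realType) (x y : R) : (x * y)%:C = x%:C * y%:C.
Proof. exact: rmorphM. Qed.

Lemma ge0_ReE (R : realType) (z : R[i]) : 0 <= z -> z = (complex.Re z)%:C.
Proof. by move=> /ger0_real/RRe_real. Qed.

Lemma sum_indicator (T : pzSemiRingType) n (w : 'I_n) (F : 'I_n -> T) :
  \sum_u (u == w)%:R * F u = F w.
Proof.
rewrite (bigD1 w) //= eqxx mul1r big1 ?addr0 // => u /negbTE ->.
by rewrite mul0r.
Qed.

Lemma is_diag_mxZ (T : pzRingType) n (a : T) (A : 'M[T]_n) :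
  is_diag_mx A -> is_diag_mx (a *: A).
Proof.
move=> /is_diag_mxP Adiag; apply/is_diag_mxP => i j neq_ij.
by rewrite mxE Adiag ?mulr0.
Qed.

Section Adjoint.
Variable R : realType.
Local Notation C := R[i].

Lemma adjM m n p (A : 'M[C]_(m, n)) (B : 'M[C]_(n, p)) :
  adj (A *m B) = adj B *m adj A.
Proof. by rewrite /adj map_mxM trmx_mul. Qed.

Lemma adjK m n (A : 'M[C]_(m, n)) : adj (adj A) = A.
Proof. by apply/matrixP => i j; rewrite !mxE conjcK. Qed.

Lemma adjD m n (A B : 'M[C]_(m, n)) : adj (A + B) = adj A + adj B.
Proof. by apply/matrixP => i j; rewrite !mxE rmorphD. Qed.

Lemma adjB m n (A B : 'M[C]_(m, n)) : adj (A - B) = adj A - adj B.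
Proof. by apply/matrixP => i j; rewrite !mxE rmorphB. Qed.

Lemma adjZ m n (c : C) (A : 'M[C]_(m, n)) : adj (c *: A) = conjc c *: adj A.
Proof. by apply/matrixP => i j; rewrite !mxE rmorphM. Qed.

Lemma adj_sum m n I (r : seq I) (P : pred I) (F : I -> 'M[C]_(m, n)) :
  adj (\sum_(i <- r | P i) F i) = \sum_(i <- r | P i) adj (F i).
Proof.
elim/big_rec2: _ => [|i A B _ <-]; last by rewrite adjD.
by apply/matrixP => i j; rewrite !mxE conjc0.
Qed.

Lemma adj1 n : adj (1%:M : 'M[C]_n) = 1%:M.
Proof. by apply/matrixP => i j; rewrite !mxE conjc_nat eq_sym. Qed.

Lemma adj_delta m n (i : 'I_m) (j : 'I_n) :
  adj (delta_mx i j : 'M[C]_(m, n)) = delta_mx j i.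
Proof. by apply/matrixP => a b; rewrite !mxE conjc_nat andbC. Qed.

End Adjoint.

Section PositiveSemidefinite.
Variable R : realType.
Local Notation C := R[i].

Lemma psd_conj n m (X : 'M[C]_n) (B : 'M[C]_(n, m)) :
  psd X -> psd (adj B *m X *m B).
Proof.
move=> psdX v.
have -> : adj v *m (adj B *m X *m B) *m v = adj (B *m v) *m X *m (B *m v).
  by rewrite adjM !mulmxA.
exact: psdX.
Qed.

Lemma psd1 n : psd (1%:M : 'M[C]_n).
Proof.
move=> v; rewrite mulmx1 !mxE; apply: sumr_ge0 => i _.
by rewrite !mxE mulrC mulcJ_ge0.
Qed.

Lemma psd_adj_mul n m (B : 'M[C]_(n, m)) : psd (adj B *m B).
Proof. by have := psd_conj B (@psd1 n); rewrite mulmx1. Qed.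

Lemma psd_pure_proj n (v : 'cV[C]_n) : psd (pure_proj v).
Proof. by rewrite /pure_proj -{1}(adjK v); apply: psd_adj_mul. Qed.

Lemma psd_proj n (P : 'M[C]_n) : adj P = P -> P *m P = P -> psd P.
Proof. by move=> adjP idP; rewrite -idP -{1}adjP; apply: psd_adj_mul. Qed.

Lemma psd0 n : psd (0 : 'M[C]_n).
Proof. by move=> v; rewrite mulmx0 mul0mx mxE. Qed.

Lemma psdD n (A B : 'M[C]_n) : psd A -> psd B -> psd (A + B).
Proof. by move=> psdA psdB v; rewrite mulmxDr mulmxDl mxE addr_ge0. Qed.

Lemma psdZ n (c : C) (A : 'M[C]_n) : 0 <= c -> psd A -> psd (c *: A).
Proof. by move=> c_ge0 psdA v; rewrite -scalemxAr -scalemxAl mxE mulr_ge0. Qed.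

Lemma psd_sum n I (r : seq I) (P : pred I) (F : I -> 'M[C]_n) :
  (forall i, P i -> psd (F i)) -> psd (\sum_(i <- r | P i) F i).
Proof.
move=> psdF; elim/big_rec: _ => [|i A Pi psdA]; first exact: psd0.
by apply: psdD; [exact: psdF | exact: psdA].
Qed.

Lemma delta_form n (A : 'M[C]_n) (a b : 'I_n) :
  (adj (delta_mx a 0 : 'cV[C]_n) *m A *m (delta_mx b 0 : 'cV[C]_n)) 0 0 = A a b.
Proof. by rewrite adj_delta -rowE -colE !mxE. Qed.

Lemma psd_diag_ge0 n (A : 'M[C]_n) (a : 'I_n) : psd A -> 0 <= A a a.
Proof. by move=> psdA; rewrite -delta_form. Qed.

Lemma psd_tr_ge0 n (A : 'M[C]_n) : psd A -> 0 <= \tr A.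
Proof. by move=> psdA; apply: sumr_ge0 => i _; apply: psd_diag_ge0. Qed.

Lemma psd_offdiag_eq0 n (A : 'M[C]_n) (a b : 'I_n) :
  psd A -> A a a = 0 -> A b b = 0 -> A a b = 0.
Proof.
move=> psdA Aaa Abb.
have form_ge0 (t : C) : 0 <= t * A a b + conjc t * A b a.
  have := psdA (delta_mx a 0 + t *: delta_mx b 0).
  rewrite adjD adjZ !mulmxDl !mulmxDr -!scalemxAl -!scalemxAr !adj_delta.
  by rewrite -!rowE -!colE !mxE Aaa Abb !mulr0 addr0 add0r.
have anti (x : C) : 0 <= x -> 0 <= - x -> x = 0.
  by move=> x_ge0 Nx_ge0; apply/le_anti; rewrite x_ge0 andbT -oppr_ge0.
have conj_i : conjc 'i%C = - 'i%C :> C by apply/eqP; rewrite eq_complex /= oppr0 !eqxx.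
have conj_Ni : conjc (- 'i%C) = 'i%C :> C.
  by apply/eqP; rewrite eq_complex /= opprK oppr0 !eqxx.
have sum0 : A a b + A b a = 0.
  apply: anti; first by have := form_ge0 1; rewrite rmorph1 !mul1r.
  by have := form_ge0 (-1); rewrite rmorphN1 !mulN1r opprD.
have diff0 : 'i%C * (A a b - A b a) = 0.
  apply: anti; first by have := form_ge0 'i%C; rewrite conj_i mulrBr mulNr.
  have -> : - ('i%C * (A a b - A b a)) = - 'i%C * A a b + conjc (- 'i%C) * A b a.
    by rewrite conj_Ni; ring.
  exact: form_ge0.
move: diff0 => /eqP; rewrite mulf_eq0 eq_complex /= oner_eq0 andbF /=.
rewrite subr_eq0 => /eqP Aba; move: sum0; rewrite Aba -mulr2n => /eqP.
by rewrite mulrn_eq0 => /eqP.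
Qed.

Lemma psd_tr_eq0 n (A : 'M[C]_n) : psd A -> \tr A = 0 -> A = 0.
Proof.
move=> psdA /eqP; rewrite psumr_eq0 => [/allP diag0|i _]; last exact: psd_diag_ge0.
have Aii i : A i i = 0 by apply/eqP/diag0; rewrite mem_index_enum.
by apply/matrixP => a b; rewrite mxE psd_offdiag_eq0.
Qed.

End PositiveSemidefinite.

Section Channel.
Variables (R : realType) (m n : nat) (N : 'M[R[i]]_m -> 'M[R[i]]_n).
Hypothesis chN : is_channel N.

Lemma channelD X Y : N (X + Y) = N X + N Y.
Proof.
case: chN => l [K [NE _]]; rewrite !NE -big_split /=.
by apply: eq_bigr => i _; rewrite mulmxDr mulmxDl.
Qed.

Lemma channelZ a X : N (a *: X) = a *: N X.
Proof.
case: chN => l [K [NE _]]; rewrite !NE scaler_sumr.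
by apply: eq_bigr => i _; rewrite -scalemxAr -scalemxAl.
Qed.

Lemma channelB X Y : N (X - Y) = N X - N Y.
Proof. by rewrite channelD -scaleN1r channelZ scaleN1r. Qed.

Lemma channel_psd X : psd X -> psd (N X).
Proof.
case: chN => l [K [NE _]] psdX; rewrite NE; apply: psd_sum => i _.
by rewrite -{1}(adjK (K i)); apply: psd_conj.
Qed.

Lemma channel_tr X : \tr (N X) = \tr X.
Proof.
case: chN => l [K [NE KK1]]; rewrite NE raddf_sum /=.
under eq_bigr do rewrite mxtrace_mulC mulmxA.
by rewrite -raddf_sum /= -mulmx_suml KK1 mul1mx.
Qed.

End Channel.

Section Blocks.
Variables (R : realType) (k d : nat).
Local Notation C := R[i].

Definition block_emb (b : 'I_k) : 'M[C]_(k * d, d) :=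
  \matrix_(u, a) (u == mxtens_index (b, a))%:R.

Definition block (b : 'I_k) (X : 'M[C]_(k * d)) : 'M[C]_d :=
  adj (block_emb b) *m X *m block_emb b.

Lemma blockE b X a a' :
  block b X a a' = X (mxtens_index (b, a)) (mxtens_index (b, a')).
Proof.
rewrite /block -mulmxA mxE.
under eq_bigr do rewrite !mxE conjc_nat.
rewrite sum_indicator.
under eq_bigr do rewrite mxE mulrC.
exact: sum_indicator.
Qed.

Lemma ptraceB_sum_block X : ptraceB X = \sum_b block b X.
Proof.
apply/matrixP => a a'; rewrite !mxE summxE.
by apply: eq_bigr => b _; rewrite blockE.
Qed.

Lemma sum_tr_block X : \sum_b \tr (block b X) = \tr X.
Proof.
rewrite /mxtrace.
transitivity (\sum_b \sum_a X (mxtens_index (b, a)) (mxtens_index (b, a))).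
  by apply: eq_bigr => b _; apply: eq_bigr => a _; rewrite blockE.
rewrite pair_big /=; symmetry; apply: reindex.
exists (@mxtens_unindex k d) => [[b a] _|u _]; first by rewrite mxtens_indexK.
exact: mxtens_unindexK.
Qed.

Lemma psd_block b X : psd X -> psd (block b X).
Proof. exact: psd_conj. Qed.

Lemma diag_block b X : is_diag_mx X -> is_diag_mx (block b X).
Proof.
move=> /is_diag_mxP Xdiag; apply/is_diag_mxP => a a' neq_aa'; rewrite blockE Xdiag //.
apply: contra neq_aa' => /eqP /val_inj /(congr1 (@mxtens_unindex k d)).
by rewrite !mxtens_indexK => -[->].
Qed.

Lemma blockB b X Y : block b (X - Y) = block b X - block b Y.
Proof. by rewrite /block mulmxBr mulmxBl. Qed.

Lemma blockZ b (c : C) X : block b (c *: X) = c *: block b X.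
Proof. by rewrite /block -scalemxAr -scalemxAl. Qed.

Lemma delta_tens1E (j : 'I_k) :
  delta_mx j j *t (1%:M : 'M[C]_d) = block_emb j *m adj (block_emb j).
Proof.
apply/matrixP => u v.
case: (mxtens_indexP u) => b a; case: (mxtens_indexP v) => b' a'.
rewrite tensmxE !mxE.
under eq_bigr do
  rewrite !mxE conjc_nat !(inj_eq (can_inj (@mxtens_indexK k d))) !xpair_eqE.
case: (b == j); case: (b' == j) => /=; last 3 first.
- by rewrite mul0r big1 // => c _; rewrite mulr0.
- by rewrite mul0r big1 // => c _; rewrite mul0r.
- by rewrite mul0r big1 // => c _; rewrite mul0r.
rewrite mul1r (eq_bigr (fun c => (c == a)%:R * (a' == c)%:R)); last first.
  by move=> c _; rewrite eq_sym.
by rewrite sum_indicator eq_sym.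
Qed.

Lemma tr_mul_delta_tens1 X (j : 'I_k) :
  \tr (X *m (delta_mx j j *t (1%:M : 'M[C]_d))) = \tr (block j X).
Proof. by rewrite delta_tens1E mulmxA mxtrace_mulC /block mulmxA. Qed.

End Blocks.

Section UniformWeights.
Variables (R : realType) (k : nat).
Hypothesis k_gt0 : (0 < k)%N.

Lemma unif_sum : \sum_(j < k) unif j = 1 :> R.
Proof.
by rewrite /unif sumr_const card_ord -[_ *+ k]mulr_natr mulVf // pnatr_eq0 -lt0n.
Qed.

Lemma unifC_sum : \sum_(j < k) (unif j)%:C = 1 :> R[i].
Proof. by rewrite -rmorph_sum unif_sum. Qed.

Lemma unif_avg_ge1_eq1 (x : 'I_k -> R[i]) :
  (forall j, x j <= 1) -> 1 <= complex.Re (\sum_j (unif j)%:C * x j) ->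
  forall j, x j = 1.
Proof.
move=> x_le1 avg_ge1 j.
have unif_ge0 (i : 'I_k) : 0 <= (unif i)%:C :> R[i] by rewrite ler0c invr_ge0 ler0n.
have gap_ge0 : 0 <= \sum_i (unif i)%:C * (1 - x i).
  by apply: sumr_ge0 => i _; rewrite mulr_ge0 // subr_ge0.
have gapE : \sum_i (unif i)%:C * (1 - x i) = 1 - \sum_i (unif i)%:C * x i.
  by under eq_bigr do rewrite mulrBr mulr1; rewrite sumrB unifC_sum.
have gap0 : \sum_i (unif i)%:C * (1 - x i) = 0.
  have Re_gap : complex.Re (\sum_i (unif i)%:C * (1 - x i)) = 0.
    apply/le_anti; rewrite {1}gapE raddfB /= subr_le0 avg_ge1 /=.
    by move: gap_ge0; rewrite lecE => /andP[].
  by rewrite (ge0_ReE gap_ge0) Re_gap rmorph0.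
move/eqP: gap0; rewrite psumr_eq0 => [/allP /(_ j (mem_index_enum _))|i _]; last first.
  by rewrite mulr_ge0 // subr_ge0.
rewrite /= mulf_eq0 fmorph_eq0 invr_eq0 pnatr_eq0 (negbTE (lt0n_neq0 k_gt0)).
by rewrite subr_eq0 => /eqP <-.
Qed.

End UniformWeights.

Lemma tr_mul_pure_proj (R : realType) n (X : 'M[R[i]]_n) (v : 'cV_n) :
  \tr (X *m pure_proj v) = (adj v *m X *m v) 0 0.
Proof. by rewrite /pure_proj mulmxA mxtrace_mulC mulmxA /mxtrace big_ord1. Qed.

Section OrthonormalEnsemble.
Variables (R : realType) (k d : nat) (psi : 'I_k -> 'cV[R[i]]_d).
Hypothesis ortho : orthonormal_vecs psi.
Local Notation C := R[i].
Local Notation rho j := (pure_proj (psi j)).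

Definition span_proj : 'M[C]_d := \sum_j rho j.

Lemma adj_psi_mul i j : adj (psi i) *m psi j = (i == j)%:R%:M.
Proof. by apply/matrixP => a b; rewrite !ord1 ortho !mxE eqxx mulr1n. Qed.

Lemma pure_proj_mul i j : rho i *m rho j = (i == j)%:R *: rho i.
Proof.
rewrite /pure_proj mulmxA -(mulmxA (psi i)) adj_psi_mul mul_mx_scalar -scalemxAl.
by case: eqVneq => [->|_]; rewrite ?scale1r ?scale0r.
Qed.

Lemma tr_pure_proj j : \tr (rho j) = 1.
Proof. by rewrite /pure_proj mxtrace_mulC adj_psi_mul eqxx mxtrace_scalar mulr1n. Qed.

Lemma span_proj_mul_pure j : span_proj *m rho j = rho j.
Proof.
rewrite /span_proj mulmx_suml (bigD1 j) //= pure_proj_mul eqxx scale1r.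
by rewrite big1 ?addr0 // => i /negbTE neq_ij; rewrite pure_proj_mul neq_ij scale0r.
Qed.

Lemma span_proj_idem : span_proj *m span_proj = span_proj.
Proof.
by rewrite {1}/span_proj mulmx_sumr; apply: eq_bigr => j _; rewrite span_proj_mul_pure.
Qed.

Lemma adj_span_proj : adj span_proj = span_proj.
Proof. by rewrite adj_sum; apply: eq_bigr => j _; rewrite adjM adjK. Qed.

Lemma tr_span_proj : \tr span_proj = k%:R.
Proof.
rewrite raddf_sum /=; under eq_bigr do rewrite tr_pure_proj.
by rewrite sumr_const card_ord.
Qed.

Lemma psd_1_span_proj : psd (1%:M - span_proj).
Proof.
apply: psd_proj; first by rewrite adjB adj1 adj_span_proj.
by rewrite mulmxBl mul1mx mulmxBr mulmx1 span_proj_idem subrr subr0.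
Qed.

Lemma psd_span_proj_sub j : psd (span_proj - rho j).
Proof.
rewrite /span_proj (bigD1 j) //= addrAC subrr add0r.
by apply: psd_sum => i _; apply: psd_pure_proj.
Qed.

Lemma avg_state_unif : avg_state unif (fun j => rho j) = (k%:R^-1)%:C *: span_proj.
Proof. by rewrite /avg_state scaler_sumr. Qed.

Hypothesis k_gt0 : (0 < k)%N.

Lemma povm_success_le1 (M : 'I_k -> 'M[C]_d) : is_povm M ->
  complex.Re (\sum_j (unif j)%:C * \tr (M j *m rho j)) <= 1.
Proof.
move=> [psdM sumM].
have le_tr j : \tr (M j *m rho j) <= 1.
  have psd_1M : psd (1%:M - M j).
    rewrite -sumM (bigD1 j) //= addrAC subrr add0r.
    by apply: psd_sum => i _; exact: psdM.
  rewrite -subr_ge0 -(tr_pure_proj j) -raddfB /= -{1}[rho j]mul1mx -mulmxBl.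
  by rewrite tr_mul_pure_proj; apply: psd_1M.
have : \sum_j (unif j)%:C * \tr (M j *m rho j) <= \sum_(j < k) (unif j)%:C :> C.
  apply: ler_sum => j _; rewrite -[leRHS]mulr1 ler_wpM2l //.
  by rewrite ler0c invr_ge0 ler0n.
by rewrite unifC_sum // lecE => /andP [].
Qed.

Lemma P_suc_orthonormal_ge1 : 1 <= P_suc unif (fun j => rho j).
Proof.
apply: (@le_sup_ub _ _ 1); first by move=> _ [M [povmM ->]]; apply: povm_success_le1.
pose j0 : 'I_k := Ordinal k_gt0.
exists (fun j => rho j + (j == j0)%:R *: (1%:M - span_proj)); split.
  split=> [j|].
    apply: psdD; first exact: psd_pure_proj.
    by apply: psdZ; [rewrite ler0n | exact: psd_1_span_proj].
  rewrite big_split /= -/span_proj (bigD1 j0) //= scale1r big1 ?addr0.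
    by rewrite addrC subrK.
  by move=> j /negbTE ->; rewrite scale0r.
under eq_bigr => j _.
  rewrite mulmxDl mxtraceD -scalemxAl mulmxBl mul1mx span_proj_mul_pure subrr.
  rewrite scaler0 mxtrace0 addr0 pure_proj_mul eqxx scale1r tr_pure_proj mulr1.
over.
by rewrite unifC_sum.
Qed.

Lemma psd_mix_sub_pure (s : R) (tau : 'M[C]_d) j : 0 <= s -> psd tau ->
  psd ((k%:R * (1 + s))%:C *: (((1 + s)^-1)%:C *:
         (avg_state unif (fun j => rho j) + s%:C *: tau)) - rho j).
Proof.
move=> s_ge0 psd_tau.
have s1_neq0 : 1 + s != 0 by rewrite gt_eqF // ltr_pwDl.
have k_neq0 : k%:R != 0 :> R by rewrite pnatr_eq0 -lt0n.
rewrite scalerA -realcM -mulrA (divff s1_neq0) mulr1 scalerDr avg_state_unif.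
rewrite scalerA -realcM (divff k_neq0) scale1r scalerA -realcM addrAC.
apply: psdD; first exact: psd_span_proj_sub.
by apply: psdZ => //; rewrite ler0c mulr_ge0.
Qed.

End OrthonormalEnsemble.

Section Robustness.
Variable R : realType.
Local Notation C := R[i].

Definition robust_mix n (rho : 'M[C]_n) (s : R) : Prop :=
  0 <= s /\ exists tau : 'M[C]_n, is_state tau /\
    incoherent (((1 + s)^-1)%:C *: (rho + s%:C *: tau)).

Lemma robustness_ge0 n (rho : 'M[C]_n) : 0 <= robustness rho.
Proof. by apply: inf_ge0 => s []. Qed.

Lemma robustness_le n (rho : 'M[C]_n) s : robust_mix rho s -> robustness rho <= s.
Proof. by apply: inf_le_ge0 => y []. Qed.

Lemma le_robustness n (rho : 'M[C]_n) x : (exists s, robust_mix rho s) ->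
  (forall s, robust_mix rho s -> x <= s) -> x <= robustness rho.
Proof. by move=> [s rho_s] lb; apply: lb_le_inf; [exists s | exact: lb]. Qed.

Lemma robust_mix_dominated n (rho sigma : 'M[C]_n) (s : R) :
  is_state rho -> incoherent sigma -> 0 <= s ->
  psd ((1 + s)%:C *: sigma - rho) -> robust_mix rho s.
Proof.
move=> [psd_rho tr_rho] [[psd_sigma tr_sigma] diag_sigma] s_ge0 dom.
have s1_neq0 : 1 + s != 0 by rewrite gt_eqF // ltr_pwDl.
have tr_dom : \tr ((1 + s)%:C *: sigma - rho) = s%:C.
  rewrite raddfB /= mxtraceZ tr_sigma tr_rho mulr1 rmorphD rmorph1.
  by rewrite [1 + _]addrC addrK.
split=> //; have [s0|s_neq0] := eqVneq s 0.
  have rhoE : rho = sigma.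
    apply/eqP; rewrite eq_sym -subr_eq0; apply/eqP.
    by move: dom tr_dom; rewrite s0 addr0 rmorph1 scale1r rmorph0; apply: psd_tr_eq0.
  exists rho; rewrite s0 rmorph0 scale0r !addr0 invr1 rmorph1 scale1r rhoE.
  by split=> //; split.
exists ((s^-1)%:C *: ((1 + s)%:C *: sigma - rho)); split.
  split; first by apply: psdZ => //; rewrite ler0c invr_ge0.
  by rewrite mxtraceZ tr_dom -realcM mulVf.
rewrite scalerA -realcM (divff s_neq0) scale1r (addrC rho) (subrK rho).
by rewrite scalerA -realcM (mulVf s1_neq0) scale1r; split=> //; split.
Qed.

Lemma robust_mix_diag_bound n (rho D : 'M[C]_n) (c : R) :
  is_state rho -> psd D -> is_diag_mx D -> 0 <= c -> psd (c%:C *: D - rho) ->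
  robust_mix rho (c * complex.Re (\tr D) - 1).
Proof.
move=> state_rho psdD diagD c_ge0 dom.
set T := c * complex.Re (\tr D).
have trD : \tr D = (complex.Re (\tr D))%:C by apply/ge0_ReE/psd_tr_ge0.
have trcD : \tr (c%:C *: D) = T%:C by rewrite mxtraceZ trD -realcM.
have T_ge1 : 1 <= T.
  rewrite -lecR -trcD rmorph1 -subr_ge0 -(proj2 state_rho) -raddfB.
  exact: psd_tr_ge0.
have T_neq0 : T != 0 by rewrite gt_eqF // (lt_le_trans ltr01).
have T1E : 1 + (T - 1) = T by rewrite addrC subrK.
apply: (@robust_mix_dominated n rho ((T^-1 * c)%:C *: D) (T - 1) state_rho).
- split; last exact: is_diag_mxZ.
  split.
    by apply: psdZ => //; rewrite ler0c mulr_ge0 // invr_ge0 (le_trans ler01).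
  by rewrite realcM -scalerA mxtraceZ trcD -realcM mulVf.
- by rewrite subr_ge0.
- by rewrite T1E scalerA -realcM (mulVKf T_neq0).
Qed.

End Robustness.

Section OptimalMIO.
Variables (R : realType) (k d : nat) (psi : 'I_k -> 'cV[R[i]]_d).
Hypotheses (k_gt0 : (0 < k)%N) (ortho : orthonormal_vecs psi).
Local Notation C := R[i].
Local Notation rho j := (pure_proj (psi j)).
Local Notation omega := (avg_state unif (fun j => pure_proj (psi j))).

Section FixedMIO.
Variable N : 'M[C]_d -> 'M[C]_(k * d).
Hypothesis mioN : is_MIO N.
Hypothesis optN : complex.Re (\sum_(j < k) (unif j)%:C *
    \tr (N (rho j) *m (delta_mx j j *t (1%:M : 'M[C]_d)))) =
  P_suc unif (fun j => rho j).

Let chN : is_channel N := proj1 mioN.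

Lemma psd_block_MIO_out j b : psd (block b (N (rho j))).
Proof. exact/psd_block/(channel_psd chN)/psd_pure_proj. Qed.

Lemma tr_block_MIO_out j : \tr (block j (N (rho j))) = 1.
Proof.
have le1 i : \tr (block i (N (rho i))) <= 1.
  rewrite -(tr_pure_proj ortho i) -(channel_tr chN (rho i)) -(sum_tr_block (N (rho i))).
  rewrite (bigD1 i) //=.
  by rewrite lerDl sumr_ge0 // => b _; apply/psd_tr_ge0/psd_block_MIO_out.
apply: (@unif_avg_ge1_eq1 _ _ k_gt0 (fun i => \tr (block i (N (rho i)))) le1).
rewrite (le_trans (P_suc_orthonormal_ge1 ortho k_gt0)) // -optN.
by under eq_bigr do rewrite tr_mul_delta_tens1.
Qed.

Lemma block_MIO_out_eq0 j b : b != j -> block b (N (rho j)) = 0.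
Proof.
move=> neq_bj; apply: psd_tr_eq0; first exact: psd_block_MIO_out.
have : \sum_(i | i != j) \tr (block i (N (rho j))) = 0.
  have := sum_tr_block (N (rho j)).
  rewrite (channel_tr chN) (tr_pure_proj ortho) (bigD1 j) //= tr_block_MIO_out.
  by rewrite -[X in _ = X]addr0 => /addrI.
move/eqP; rewrite psumr_eq0 => [/allP /(_ b (mem_index_enum _))|i _]; last first.
  exact/psd_tr_ge0/psd_block_MIO_out.
by rewrite neq_bj => /eqP.
Qed.

Lemma ptraceB_MIO_out j : ptraceB (N (rho j)) = block j (N (rho j)).
Proof.
rewrite ptraceB_sum_block (bigD1 j) //= big1 ?addr0 // => b.
exact: block_MIO_out_eq0.
Qed.

(* If sigma := (omega + s tau)/(1 + s) is incoherent then so is N sigma, and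
   k (1 + s) N sigma dominates N (rho j), whose reduced state is its j-th
   block; so the j-th block of N sigma bounds the robustness of that state. *)
Lemma MIO_avg_robustness_le s : robust_mix omega s ->
  \sum_j unif j * robustness (ptraceB (N (rho j))) <= s.
Proof.
move=> [s_ge0 [tau [[psd_tau _] inc_mix]]].
have [[psd_Y tr_Y] diag_Y] := proj2 mioN _ inc_mix.
set Y := N _ in psd_Y tr_Y diag_Y.
pose t j := complex.Re (\tr (block j Y)).
have t_sum : \sum_j t j = 1.
  apply: complexI; rewrite rmorph_sum rmorph1 -tr_Y -sum_tr_block.
  by apply: eq_bigr => j _; apply/esym/ge0_ReE/psd_tr_ge0/psd_block.
have rob_le j : robustness (ptraceB (N (rho j))) <= k%:R * (1 + s) * t j - 1.
  rewrite ptraceB_MIO_out; apply/robustness_le/robust_mix_diag_bound.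
  - by split; [exact: psd_block_MIO_out | exact: tr_block_MIO_out].
  - exact: psd_block.
  - exact: diag_block.
  - by rewrite mulr_ge0 // addr_ge0.
  rewrite -blockZ -blockB -(channelZ chN) -(channelB chN).
  exact/psd_block/(channel_psd chN)/psd_mix_sub_pure.
have unif_ge0 (j : 'I_k) : 0 <= unif j :> R by rewrite invr_ge0 ler0n.
apply: le_trans (ler_sum _ (fun j _ => ler_wpM2l (unif_ge0 j) (rob_le j))) _.
have k_neq0 : k%:R != 0 :> R by rewrite pnatr_eq0 -lt0n.
rewrite /unif; under eq_bigr do rewrite mulrBr mulr1 !mulrA (mulVf k_neq0) mul1r.
by rewrite sumrB -mulr_sumr t_sum mulr1 (unif_sum R k_gt0) addrAC subrr add0r.
Qed.

End FixedMIO.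

Lemma eta_MIO_le s : robust_mix omega s -> eta_MIO unif (fun j => rho j) <= s.
Proof.
move=> mix_s; apply: sup_le_ge0 (proj1 mix_s) => _ [N [mioN [optN ->]]].
exact: MIO_avg_robustness_le.
Qed.

Lemma eta_MIO_ge0 s : robust_mix omega s -> 0 <= eta_MIO unif (fun j => rho j).
Proof.
move=> mix_s; apply: (@sup_ge0 _ _ s) => _ [N [mioN [optN ->]]].
  by apply: sumr_ge0 => j _; rewrite mulr_ge0 ?robustness_ge0 // invr_ge0 ler0n.
exact: MIO_avg_robustness_le.
Qed.

End OptimalMIO.

Lemma eigenvalue_scaled_idem (F : fieldType) n (A : 'M[F]_n) c a :
  A *m A = c *: A -> eigenvalue A a -> a = 0 \/ a = c.
Proof.
move=> AA /eigenvalueP [v vA v_neq0].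
have vAA : v *m A *m A = (a * a) *: v by rewrite vA -scalemxAl vA scalerA.
have vcA : v *m (A *m A) = (c * a) *: v by rewrite AA -scalemxAr vA scalerA.
have /eqP : (a * a - c * a) *: v = 0 by rewrite scalerBl -vAA -vcA mulmxA subrr.
rewrite scalemx_eq0 (negbTE v_neq0) orbF -mulrBl mulf_eq0 subr_eq0.
by case/orP => /eqP; [right | left].
Qed.

Section Spectrum.
Variables (R : realType) (n : nat).
Implicit Types (A : 'M[R[i]]_n) (lam : 'I_n -> R).

Lemma spectrum_eigenvalue A lam i : spectrum A lam -> eigenvalue A (lam i)%:C.
Proof.
move=> specA; rewrite eigenvalue_root_char specA; apply/rootP.
by rewrite horner_prod (bigD1 i) //= hornerXsubC subrr mul0r.
Qed.

Lemma spectrum_sum A lam : (0 < n)%N -> spectrum A lam -> (\sum_i lam i)%:C = \tr A.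
Proof.
move=> n_gt0 specA; set ps := [seq (lam i)%:C | i <- index_enum 'I_n].
have size_ps : size ps = n.
  by rewrite size_map [index_enum _]unlock -enumT size_enum_ord.
have := coefPn_prod_XsubC (ps := ps); rewrite size_ps => /(_ (lt0n_neq0 n_gt0)).
rewrite !big_map -specA char_poly_trace // => /eqP; rewrite eqr_opp => /eqP ->.
by rewrite rmorph_sum.
Qed.

End Spectrum.

Section AverageState.
Variables (R : realType) (k d : nat) (psi : 'I_k -> 'cV[R[i]]_d).
Hypotheses (k_gt0 : (0 < k)%N) (lt_kd : (k < d)%N) (ortho : orthonormal_vecs psi).
Local Notation C := R[i].
Local Notation omega := (avg_state unif (fun j => pure_proj (psi j))).

Let natC m : (m%:R : C) = (m%:R : R)%:C.
Proof. by rewrite rmorph_nat. Qed.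

Let k_neq0 : k%:R != 0 :> R.
Proof. by rewrite pnatr_eq0 -lt0n. Qed.

(* Mixing omega with the maximally mixed state on the complement of the span
   of the psi_j gives the maximally mixed state I/d. *)
Lemma robust_mix_avg_state : robust_mix omega (d%:R / k%:R - 1).
Proof.
have k_gt0R : 0 < k%:R :> R by rewrite ltr0n.
have dk_gt0 : 0 < d%:R - k%:R :> R by rewrite subr_gt0 ltr_nat.
have d_neq0 : d%:R != 0 :> R by rewrite pnatr_eq0 -lt0n (ltn_trans k_gt0 lt_kd).
set s := d%:R / k%:R - 1.
have s_ge0 : 0 <= s by rewrite subr_ge0 ler_pdivlMr // mul1r ler_nat ltnW.
have s_dk : s * (d%:R - k%:R)^-1 = k%:R^-1 by rewrite /s; field; rewrite k_neq0 gt_eqF.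
have s1 : (1 + s)^-1 * k%:R^-1 = d%:R^-1.
  by rewrite /s addrC subrK; field; rewrite k_neq0 d_neq0.
split=> //; exists (((d%:R - k%:R)^-1)%:C *: (1%:M - span_proj psi)); split.
  split; first by apply: psdZ; [rewrite ler0c invr_ge0 ltW | exact: psd_1_span_proj].
  rewrite mxtraceZ raddfB /= mxtrace1 (tr_span_proj ortho) !natC -rmorphB -realcM.
  by rewrite mulVf // gt_eqF.
rewrite avg_state_unif scalerA -realcM s_dk -scalerDr (addrC (span_proj psi)).
rewrite (subrK (span_proj psi)) scalerA -realcM s1.
split; last exact/is_diag_mxZ/scalar_mx_is_diag.
split; first by apply: psdZ; [rewrite ler0c invr_ge0 ler0n | exact: psd1].
by rewrite mxtraceZ mxtrace1 natC -realcM mulVf.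
Qed.

(* omega = P / k with P a rank-k projector, so its spectrum consists of 0s
   and 1/k's, and its entropy is log2 k. *)
Lemma vN_entropy_avg_state_le : vN_entropy omega <= log2 k%:R.
Proof.
have omega2 : omega *m omega = (k%:R^-1 : R)%:C *: omega.
  by rewrite avg_state_unif -scalemxAl -scalemxAr (span_proj_idem ortho) scalerA.
have tr_omega : \tr omega = 1.
  by rewrite avg_state_unif mxtraceZ (tr_span_proj ortho) natC -realcM mulVf.
apply: sup_le_ge0; last by apply: log2_ge0; rewrite ler1n.
move=> _ [lam [spec ->]].
have xlogE i : xlog2x (lam i) = - (lam i * log2 k%:R).
  have := eigenvalue_scaled_idem omega2 (spectrum_eigenvalue i spec).
  case=> [/eqP|/complexI lamE].
    by rewrite fmorph_eq0 /xlog2x => /eqP ->; rewrite eqxx mul0r oppr0.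
  by rewrite /xlog2x lamE invr_eq0 (negbTE k_neq0) log2V ?ltr0n // mulrN.
have lam_sum : \sum_i lam i = 1.
  by apply: complexI; rewrite (spectrum_sum (ltn_trans k_gt0 lt_kd) spec) tr_omega.
under eq_bigr do rewrite xlogE.
by rewrite sumrN opprK -mulr_suml lam_sum mul1r.
Qed.

End AverageState.

Theorem propositionS1 (R : realType) (d k : nat) (psi : 'I_k -> 'cV[R[i]]_d) :
  (0 < k)%N -> (k < d)%N -> orthonormal_vecs psi ->
  C_MIO unif (fun j => pure_proj (psi j)) +
    vN_entropy (avg_state unif (fun j => pure_proj (psi j))) = log2 d%:R ->
  Cmax (avg_state unif (fun j => pure_proj (psi j))) +
    vN_entropy (avg_state unif (fun j => pure_proj (psi j))) = log2 d%:R.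
Proof.
move=> k_gt0 lt_kd ortho; rewrite /C_MIO /Cmax.
set omega := avg_state _ _; set eta := eta_MIO _ _.
have mix := robust_mix_avg_state k_gt0 lt_kd ortho.
have eta_ge0 : 0 <= eta := eta_MIO_ge0 k_gt0 ortho mix.
have eta_le : eta <= robustness omega.
  by apply: le_robustness; [exists (d%:R / k%:R - 1) | exact: eta_MIO_le].
have rob_le : robustness omega <= d%:R / k%:R - 1 := robustness_le mix.
have S_le : vN_entropy omega <= log2 k%:R := vN_entropy_avg_state_le k_gt0 lt_kd ortho.
have rob_ge0 := robustness_ge0 omega.
have k_gt0R : 0 < k%:R :> R by rewrite ltr0n.
have d_gt0R : 0 < d%:R :> R by rewrite ltr0n (ltn_trans k_gt0 lt_kd).
have C_le : log2 (1 + eta) <= log2 (1 + robustness omega).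
  by apply: ler_log2; lra.
have Cmax_le : log2 (1 + robustness omega) <= log2 d%:R - log2 k%:R.
  by rewrite -log2_div //; apply: ler_log2; lra.
lra.
Qed.
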